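(* Let $G$ be a compact abelian group and $H$ a closed subgroup of $G$. Then $\lambda(G)\le\lambda(G/H)$.
   Context: For a compact abelian group $G$ with normalized Haar measure $\mu$ and (multiplicative) dual group of characters $\widehat{G}$, let $\mathbb{Z}[\widehat{G}]$ denote the ring of integral linear combinations of characters, regarded as functions on $G$. For $f\in\mathbb{Z}[\widehat{G}]$, the logarithmic Mahler measure over $G$ is $\mathsf{m}_G(f)=\int_G\log|f|\,d\mu$ (with $\log 0=-\infty$). The Lehmer constant of $G$ is $\lambda(G)=\inf\{\mathsf{m}_G(f): f\in\mathbb{Z}[\widehat{G}],\ \mathsf{m}_G(f)>0\}$ (the infimum of the empty set being $+\infty$). *)

From HB Require Import structures.
From mathcomp Require Import all_boot all_order all_algebra.
From mathcomp Require Import all_classical all_reals all_analysis.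
From mathcomp Require Import complex.

Set Implicit Arguments.
Unset Strict Implicit.
Unset Printing Implicit Defensive.

Import Order.TTheory GRing.Theory Num.Theory.
Import numFieldNormedType.Exports.
Local Open Scope classical_set_scope.
Local Open Scope ring_scope.

Definition pointed_of (G : topologicalZmodType) : Type := G.
HB.instance Definition _ (G : topologicalZmodType) :=
  Choice.on (pointed_of G).
HB.instance Definition _ (G : topologicalZmodType) :=
  isPointed.Build (pointed_of G) (0 : G).
Notation borel G :=
  (g_sigma_algebraType (@open G : set (set (pointed_of G)))).

(* compact Hausdorff abelian group (abelian topological group = topologicalZmodType) *)
Definition compact_abelian_group (G : topologicalZmodType) : Prop :=
  compact [set: G] /\ hausdorff_space G.

Definition closed_subgroup (G : topologicalZmodType) (H : set G) : Prop :=
  closed H /\ H 0 /\ (forall x y, H x -> H y -> H (x - y)).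

Definition translate (G : zmodType) (x : G) (A : set G) : set G :=
  [set x + a | a in A].

Definition haar_measure (R : realType) (G : topologicalZmodType)
    (mu : {measure set (borel G) -> \bar R}) : Prop :=
  [/\ mu setT = 1%E,
      (forall (x : G) (A : set (borel G)), measurable A ->
          mu (translate x A : set (borel G)) = mu A) &
      (forall A : set (borel G), measurable A ->
          mu A = ereal_inf [set mu (U : set (borel G)) |
                             U in [set U : set G | open U /\ A `<=` U]])].

Definition cmod (R : rcfType) (z : R[i]) : R :=
  Num.sqrt ((@complex.Re R z) ^+ 2 + (@complex.Im R z) ^+ 2).

Definition ccontinuous (R : realType) (G : topologicalType) (f : G -> R[i]) :=
  continuous (fun x => @complex.Re R (f x)) /\ continuous (fun x => @complex.Im R (f x)).

Definition is_character (R : realType) (G : topologicalZmodType)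
    (chi : G -> R[i]) : Prop :=
  [/\ ccontinuous chi,
      (forall x, cmod (chi x) = 1) &
      (forall x y, chi (x + y) = chi x * chi y)].

(* Z[G^]: integral linear combinations of characters, as functions on G *)
Definition in_Zdual (R : realType) (G : topologicalZmodType)
    (f : G -> R[i]) : Prop :=
  exists s : seq (int * {chi : G -> R[i] | is_character chi}),
    forall x, f x = \sum_(p <- s) (p.1)%:~R * (sval p.2) x.

Definition mahler (R : realType) (G : topologicalZmodType)
    (mu : {measure set (borel G) -> \bar R}) (f : G -> R[i]) : \bar R :=
  (\int[mu]_(x in setT)
     (if f x == 0%R then -oo else (ln (cmod (f x)))%:E))%E.

(* Lehmer constant of G (inf of the empty set is +oo) *)
Definition lehmer (R : realType) (G : topologicalZmodType)
    (mu : {measure set (borel G) -> \bar R}) : \bar R :=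
  ereal_inf [set mahler mu f | f in [set f | in_Zdual f /\ (0 < mahler mu f)%E]].

From HB Require Import structures.
From mathcomp Require Import all_boot all_order all_algebra.
From mathcomp Require Import all_classical all_reals all_analysis.
From mathcomp Require Import complex.
From mathcomp Require Import measurable_realfun.

(* Pulling back along a continuous surjective homomorphism pi : G -> Q maps
   Z[Q^] into Z[G^] (a character of Q composed with pi is a character of G) and
   preserves the Mahler measure, because the image of the Haar measure of G
   under pi is the Haar measure of Q: for P >= 0, using translation invariance
   on both groups and Fubini,
     int_G P(pi x) dx = int_Q int_G P(pi x + y) dx dy
                      = int_G int_Q P(pi x + y) dy dx = int_Q P(y) dy.
   So every positive Mahler measure over Q is one over G, and the infimum over
   the larger set is smaller.  Compactness and the description of the kernel
   are not needed. *)

Set Implicit Arguments.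
Unset Strict Implicit.
Unset Printing Implicit Defensive.

Import Order.TTheory GRing.Theory Num.Theory.
Import numFieldNormedType.Exports.
Local Open Scope classical_set_scope.
Local Open Scope ring_scope.

Section borel_measurable.
Context (R : realType) (K K' : topologicalZmodType).

Lemma open_borel_measurable (U : set K) : open U -> measurable (U : set (borel K)).
Proof. exact: sub_sigma_algebra. Qed.

Lemma continuous_borel_measurable (g : K -> K') :
  continuous g -> measurable_fun setT (g : borel K -> borel K').
Proof.
move=> /continuousP cg.
apply: (@measurability _ _ _ _ _ _ (@open K' : set (set (borel K')))) => //.
by move=> _ [U oU <-]; rewrite setTI; apply: open_borel_measurable; exact: cg.
Qed.

Lemma continuous_borel_measurableR (f : K -> R) :
  continuous f -> measurable_fun setT (f : borel K -> R).
Proof.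
move=> /continuousP cf.
apply: (measurability _ (RGenOpens.measurableE R)).
move=> _ [_ [a [b ->]] <-]; rewrite setTI.
apply: open_borel_measurable; exact/cf/interval_open.
Qed.

Lemma translation_continuous (a : K) : continuous (fun x : K => x + a).
Proof.
move=> x.
apply: (@continuous_comp _ _ _ (fun x => (x, a)) (fun z : K * K => z.1 + z.2)).
  by apply: cvg_pair; [exact: cvg_id | exact: cvg_cst].
exact: add_continuous.
Qed.

End borel_measurable.

Lemma preimage_addr (G : zmodType) (a : G) (A : set G) :
  (fun x => x + a) @^-1` A = translate (- a) A.
Proof.
apply/seteqP; split => x /=.
  by move=> Axa; exists (x + a) => //; rewrite [x + a]addrC addKr.
by move=> [b Ab <-]; rewrite addrC addNKr.
Qed.

Lemma haar_integral_translate (R : realType) (K : topologicalZmodType)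
    (mu : {measure set (borel K) -> \bar R}) (P : K -> \bar R) (a : K) :
  haar_measure mu -> measurable_fun setT (P : borel K -> _) ->
  (forall x, 0 <= P x)%E ->
  (\int[mu]_x P ((x : K) + a)%R = \int[mu]_x P x)%E.
Proof.
move=> [_ mu_translate _] mP P0.
set t : borel K -> borel K := fun x : K => x + a.
have mt : measurable_fun setT t :=
  continuous_borel_measurable (@translation_continuous K a).
transitivity (\int[pushforward mu t]_x P x)%E.
  by rewrite (ge0_integral_pushforward mt).
apply: eq_measure_integral => A mA _.
rewrite /pushforward -(mu_translate (- a) _ mA).
by congr (mu _); exact: preimage_addr.
Qed.

Lemma finite_measure_sigma_finite d (T : measurableType d) (R : realType)
    (mu : {measure set T -> \bar R}) :
  (mu setT < +oo)%E -> sigma_finite setT mu.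
Proof.
by move=> mu_fin; apply: fin_num_fun_sigma_finite;
  [rewrite measure0 | exact: lty_fin_num_fun].
Qed.

Lemma sigma_finite_Fubini d1 d2 (T1 : measurableType d1)
    (T2 : measurableType d2) (R : realType)
    (mu1 : {measure set T1 -> \bar R}) (mu2 : {measure set T2 -> \bar R})
    (f : T1 * T2 -> \bar R) :
  sigma_finite setT mu1 -> sigma_finite setT mu2 ->
  measurable_fun setT f -> (forall z, 0 <= f z)%E ->
  (\int[mu1]_x \int[mu2]_y f (x, y) = \int[mu2]_y \int[mu1]_x f (x, y))%E.
Proof.
move=> sf1 sf2 mf f0.
pose m1 := HB.pack_for (SFiniteMeasure.type T1 R) (Measure.sort mu1)
  (isSFinite.Build _ _ _ _ (sfinite_measure_sigma_finite sf1)).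
pose m2 := HB.pack_for (SFiniteMeasure.type T2 R) (Measure.sort mu2)
  (isSFinite.Build _ _ _ _ (sfinite_measure_sigma_finite sf2)).
exact: (@sfinite_Fubini _ _ _ _ _ m1 m2 f f0 mf).
Qed.

Section complex_measurable.
Context d (T : measurableType d) (R : realType).

Definition cmeasurable (u : T -> R[i]) :=
  measurable_fun setT (fun t => complex.Re (u t)) /\
  measurable_fun setT (fun t => complex.Im (u t)).

Lemma cmeasurable_cst (c : R[i]) : cmeasurable (fun _ => c).
Proof. by split; exact: measurable_cst. Qed.

Lemma cmeasurable_add u v :
  cmeasurable u -> cmeasurable v -> cmeasurable (fun t => u t + v t).
Proof.
move=> [ur ui] [vr vi]; split.
- have -> : (fun t => complex.Re (u t + v t)) =
      (fun t => complex.Re (u t)) \+ (fun t => complex.Re (v t)).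
    by apply/funext => t /=; case: (u t) => ? ?; case: (v t).
  exact: measurable_funD.
- have -> : (fun t => complex.Im (u t + v t)) =
      (fun t => complex.Im (u t)) \+ (fun t => complex.Im (v t)).
    by apply/funext => t /=; case: (u t) => ? ?; case: (v t).
  exact: measurable_funD.
Qed.

Lemma cmeasurable_mul u v :
  cmeasurable u -> cmeasurable v -> cmeasurable (fun t => u t * v t).
Proof.
move=> [ur ui] [vr vi]; split.
- have -> : (fun t => complex.Re (u t * v t)) =
      (fun t => complex.Re (u t)) \* (fun t => complex.Re (v t)) \-
      (fun t => complex.Im (u t)) \* (fun t => complex.Im (v t)).
    by apply/funext => t /=; case: (u t) => ? ?; case: (v t).
  by apply: measurable_funB; exact: measurable_funM.
- have -> : (fun t => complex.Im (u t * v t)) =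
      (fun t => complex.Re (u t)) \* (fun t => complex.Im (v t)) \+
      (fun t => complex.Im (u t)) \* (fun t => complex.Re (v t)).
    by apply/funext => t /=; case: (u t) => ? ?; case: (v t).
  by apply: measurable_funD; exact: measurable_funM.
Qed.

Lemma cmeasurable_sum (I : Type) (s : seq I) (u : I -> T -> R[i]) :
  (forall i, cmeasurable (u i)) -> cmeasurable (fun t => \sum_(i <- s) u i t).
Proof.
move=> um; elim: s => [|i s IHs].
  under eq_fun do rewrite big_nil; exact: cmeasurable_cst.
under eq_fun do rewrite big_cons; exact: cmeasurable_add.
Qed.

Definition elog_cmod (z : R[i]) : \bar R :=
  if z == 0 then -oo%E else (ln (cmod z))%:E.

Lemma measurable_elog_cmod u :
  cmeasurable u -> measurable_fun setT (elog_cmod \o u).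
Proof.
move=> [ur ui].
have -> : elog_cmod \o u = fun t =>
    if (complex.Re (u t) == 0) && (complex.Im (u t) == 0) then -oo%E
    else (EFin \o (@ln R \o (@Num.sqrt R \o
      ((fun t => complex.Re (u t) ^+ 2) \+ (fun t => complex.Im (u t) ^+ 2))))) t.
  by apply/funext => t /=; rewrite /elog_cmod /cmod eq_complex; case: (u t).
apply: measurable_fun_ifT.
- by apply: measurable_and; apply: measurable_fun_eqr => //; exact: measurable_cst.
- exact: measurable_cst.
apply/measurable_EFinP; apply: measurableT_comp; first exact: measurable_ln.
apply: measurableT_comp; first exact: continuous_measurable_fun (@sqrt_continuous R).
by apply: measurable_funD; exact: measurable_funX.
Qed.

End complex_measurable.

Lemma cmeasurable_comp d d' (T : measurableType d) (T' : measurableType d')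
    (R : realType) (g : T' -> T) (u : T -> R[i]) :
  measurable_fun setT g -> cmeasurable u -> cmeasurable (u \o g).
Proof.
move=> mg [ur ui].
by split; [exact: measurableT_comp ur mg | exact: measurableT_comp ui mg].
Qed.

Section characters.
Context (R : realType) (K : topologicalZmodType).
Implicit Types (chi : K -> R[i]) (f : K -> R[i]).

Lemma character_cmeasurable chi :
  is_character chi -> cmeasurable (chi : borel K -> R[i]).
Proof. by move=> [[cr ci] _ _]; split; exact: continuous_borel_measurableR. Qed.

(* The product sigma-algebra of borel K with itself is in general smaller than
   the Borel sigma-algebra of K * K, so the measurability of addition is not
   available; multiplicativity of characters replaces it. *)
Lemma character_add_cmeasurable chi : is_character chi ->
  cmeasurable ((fun z => chi (z.1 + z.2)) : borel K * borel K -> R[i]).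
Proof.
move=> chiC; have [_ _ chiD] := chiC.
under eq_fun do rewrite chiD.
apply: cmeasurable_mul; apply: cmeasurable_comp (character_cmeasurable chiC).
  exact: measurable_fst.
exact: measurable_snd.
Qed.

Lemma in_Zdual_cmeasurable_comp d (T : measurableType d) (g : T -> K) f :
  (forall chi, is_character chi -> cmeasurable (chi \o g)) ->
  in_Zdual f -> cmeasurable (f \o g).
Proof.
move=> mg [s fE].
have -> : f \o g = fun t => \sum_(p <- s) (p.1)%:~R * sval p.2 (g t).
  by apply/funext => t; rewrite /= fE.
apply: cmeasurable_sum => p; apply: cmeasurable_mul; first exact: cmeasurable_cst.
exact: mg (svalP p.2).
Qed.

Lemma is_character_comp (K' : topologicalZmodType) (pi : K' -> K) chi :
  (forall x y, pi (x + y) = pi x + pi y) -> continuous pi ->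
  is_character chi -> is_character (chi \o pi).
Proof.
move=> piD pi_cont [[cr ci] chi1 chiD]; split.
- split => x.
    exact: continuous_comp (pi_cont x) (cr (pi x)).
  exact: continuous_comp (pi_cont x) (ci (pi x)).
- by move=> x; exact: chi1.
- by move=> x y; rewrite /= piD chiD.
Qed.

Lemma in_Zdual_comp (K' : topologicalZmodType) (pi : K' -> K) f :
  (forall x y, pi (x + y) = pi x + pi y) -> continuous pi ->
  in_Zdual f -> in_Zdual (f \o pi).
Proof.
move=> piD pi_cont [s fE].
exists [seq (p.1, exist _ (sval p.2 \o pi) (is_character_comp piD pi_cont (svalP p.2)))
       | p <- s].
by move=> x; rewrite big_map /= fE.
Qed.

End characters.

Section haar_quotient.
Context (R : realType) (G Q : topologicalZmodType).
Variables (muG : {measure set (borel G) -> \bar R})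
          (muQ : {measure set (borel Q) -> \bar R}) (pi : G -> Q).
Hypotheses (haarG : haar_measure muG) (haarQ : haar_measure muQ).
Hypothesis piD : forall x y, pi (x + y) = pi x + pi y.
Hypothesis pi_surj : forall q : Q, exists x : G, pi x = q.

Let integral_probability_cst d (T : measurableType d)
    (mu : {measure set T -> \bar R}) (c : \bar R) :
  mu setT = 1%E -> (\int[mu]_x c = c)%E.
Proof. by move=> mu1; rewrite integral_cst // mu1 mule1. Qed.

Lemma ge0_haar_integral_comp (P : Q -> \bar R) :
  (forall y, 0 <= P y)%E ->
  measurable_fun setT (P : borel Q -> _) ->
  measurable_fun setT ((P \o pi) : borel G -> _) ->
  measurable_fun setT ((fun z => P (pi z.1 + z.2)) : borel G * borel Q -> _) ->
  (\int[muG]_x P (pi x) = \int[muQ]_y P y)%E.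
Proof.
move=> P0 mP mPpi mPGQ.
have [G1 _ _] := haarG; have [Q1 _ _] := haarQ.
have sfG : sigma_finite setT muG.
  by apply: finite_measure_sigma_finite; rewrite G1 ltry.
have sfQ : sigma_finite setT muQ.
  by apply: finite_measure_sigma_finite; rewrite Q1 ltry.
have inner_G y : (\int[muG]_x P (pi x + y)%R = \int[muG]_x P (pi x))%E.
  have [a <-] := pi_surj y.
  under eq_integral do rewrite -piD.
  exact: haar_integral_translate haarG mPpi (fun _ => P0 _).
have inner_Q x : (\int[muQ]_y P (pi x + y)%R = \int[muQ]_y P y)%E.
  under eq_integral do rewrite addrC.
  exact: haar_integral_translate haarQ mP P0.
rewrite -[LHS](integral_probability_cst _ Q1) -[RHS](integral_probability_cst _ G1).
under eq_integral => y _ do rewrite -(inner_G y).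
rewrite -(sigma_finite_Fubini sfG sfQ mPGQ) //.
by apply: eq_integral => x _; rewrite inner_Q.
Qed.

Lemma haar_integral_comp (F : Q -> \bar R) :
  measurable_fun setT (F : borel Q -> _) ->
  measurable_fun setT ((F \o pi) : borel G -> _) ->
  measurable_fun setT ((fun z => F (pi z.1 + z.2)) : borel G * borel Q -> _) ->
  (\int[muG]_x F (pi x) = \int[muQ]_y F y)%E.
Proof.
move=> mF mFpi mFGQ.
have mFGQ' : measurable_fun setT
    ((F \o (fun z => pi z.1 + z.2)) : borel G * borel Q -> _) by [].
change (\int[muG]_x (F \o pi) x = \int[muQ]_y F y)%E.
rewrite integralE [RHS]integralE funepos_comp funeneg_comp.
congr (_ - _)%E; apply: ge0_haar_integral_comp.
- exact: funepos_ge0.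
- exact: measurable_funepos.
- by have := measurable_funepos mFpi; rewrite funepos_comp.
- by have := measurable_funepos mFGQ'; rewrite funepos_comp.
- exact: funeneg_ge0.
- exact: measurable_funeneg.
- by have := measurable_funeneg mFpi; rewrite funeneg_comp.
- by have := measurable_funeneg mFGQ'; rewrite funeneg_comp.
Qed.

Hypothesis pi_cont : continuous pi.

Lemma mahler_comp f : in_Zdual f -> mahler muG (f \o pi) = mahler muQ f.
Proof.
move=> Zf.
have mpi : measurable_fun setT (pi : borel G -> borel Q) :=
  continuous_borel_measurable pi_cont.
have mpi_id : measurable_fun setT
    ((fun z => (pi z.1, z.2)) : borel G * borel Q -> borel Q * borel Q).
  apply: measurable_fun_pair; last exact: measurable_snd.
  exact: measurableT_comp mpi measurable_fst.
have cf : cmeasurable (f : borel Q -> R[i]).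
  apply: (in_Zdual_cmeasurable_comp (g := id : borel Q -> Q)) Zf => chi.
  exact: character_cmeasurable.
have cfpi : cmeasurable ((f \o pi) : borel G -> R[i]).
  apply: in_Zdual_cmeasurable_comp Zf => chi chiC.
  exact: cmeasurable_comp mpi (character_cmeasurable chiC).
have cfGQ : cmeasurable ((fun z => f (pi z.1 + z.2)) : borel G * borel Q -> R[i]).
  apply: (in_Zdual_cmeasurable_comp
    (g := fun z : borel G * borel Q => pi z.1 + z.2)) Zf => chi chiC.
  exact: cmeasurable_comp mpi_id (character_add_cmeasurable chiC).
exact: haar_integral_comp (measurable_elog_cmod cf) (measurable_elog_cmod cfpi)
  (measurable_elog_cmod cfGQ).
Qed.

End haar_quotient.

Unset Implicit Arguments.

(* The quotient G/H is represented by any compact (Hausdorff) abelian group Q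
   together with a continuous surjective homomorphism pi : G -> Q whose
   kernel is H (such Q is isomorphic to G/H as a topological group). *)
Theorem lemma2p2 (R : realType) (G Q : topologicalZmodType)
    (muG : {measure set (borel G) -> \bar R})
    (muQ : {measure set (borel Q) -> \bar R})
    (H : set G) (pi : G -> Q) :
  compact_abelian_group G -> compact_abelian_group Q ->
  haar_measure muG -> haar_measure muQ ->
  closed_subgroup H ->
  (forall x y, pi (x + y) = pi x + pi y) ->
  continuous pi ->
  (forall q : Q, exists x : G, pi x = q) ->
  (forall x : G, pi x = 0 <-> H x) ->
  (lehmer muG <= lehmer muQ)%E.
Proof.
move=> _ _ haarG haarQ _ piD pi_cont pi_surj _.
apply: ereal_inf_le_tmp => _ [f [Zf mahler_gt0] <-].
have mahler_f := mahler_comp haarG haarQ piD pi_surj pi_cont Zf.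
exists (f \o pi); last exact: mahler_f.
by split; [exact: in_Zdual_comp | rewrite mahler_f].
Qed.
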